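(* There is $d_0$ such that the following holds for all $d\geq d_0$. Let $G$ be a graph on $n$ vertices with average degree $d$. Then there exists a non-empty bipartite subgraph $G''$ of $G$ with parts $X$ and $Y$ such that $d_{G''}(x)\geq\frac{\Delta(G'')}{160}$ for every $x\in X$, and $d_{G''}(y)\geq\frac{d}{20\log n}$ for every $y\in Y$.
   Context: $d_{G''}(v)$ is the degree of $v$ in $G''$ and $\Delta(G'')$ the maximum degree of $G''$. Logarithms are base $2$. *)

From mathcomp Require Import all_boot.
From Stdlib Require Import Reals.
Set Implicit Arguments. Unset Strict Implicit. Unset Printing Implicit Defensive.

(* A (simple) graph on a finite vertex type T is a relation e : rel T,
   required to be symmetric and irreflexive where used. *)

Definition deg (T : finType) (e : rel T) (v : T) : nat := #|[set u | e v u]|.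

Definition maxdeg (T : finType) (e : rel T) (V : {set T}) : nat :=
  \max_(v in V) deg e v.

Definition avgdeg (T : finType) (e : rel T) : R :=
  Rdiv (INR (\sum_(v : T) deg e v)) (INR #|T|).

Definition log2 (x : R) : R := Rdiv (ln x) (ln 2).

(* A maximum cut (S, ~S) keeps half of the edges at every vertex.  In
   the cut graph c give v the rank [v in S] + 2 * ceil(log2 deg_c v), and sort
   the edges into layers by the larger rank of their ends: layer r joins its
   heads (the vertices of rank r) to other vertices and has maximum degree at
   most 2 ^ (r/2).  Weight the heads of layer r by N * 2 ^ (r/2) and all other
   vertices by a threshold t.  Summed over the O(log n) layers the weights
   are small, so some layer has degree sum large compared to its weight, and
   pruning its light vertices leaves the subgraph: X = heads, Y = the rest.
   Choosing N = n and t ~ 8 n d / log2 n and estimating over the reals gives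
   the constants. *)
Set Warnings "-notation-overridden".
From Stdlib Require Import Reals Lra ZArith.
From mathcomp Require Import all_boot zify.
Set Implicit Arguments. Unset Strict Implicit. Unset Printing Implicit Defensive.

Section Degrees.
Variable T : finType.
Implicit Types (h : rel T) (v w : T).

Lemma degE h v : deg h v = \sum_u h v u.
Proof.
rewrite /deg -sum1dep_card big_mkcond /=; apply: eq_bigr => u _.
by case: (h v u).
Qed.

Lemma deg_mono h h' v : (forall u, h v u -> h' v u) -> deg h v <= deg h' v.
Proof.
by move=> hh'; apply: subset_leq_card; apply/subsetP => u; rewrite !inE; apply: hh'.
Qed.

Definition degsum h : nat := \sum_v deg h v.

Lemma edge_of_degsum h : 0 < degsum h -> exists x y, h x y.
Proof.
rewrite /degsum lt0n sum_nat_eq0 => /forallPn[x]; rewrite -lt0n card_gt0.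
by case/set0Pn => y; rewrite inE; exists x, y.
Qed.

Lemma degsum_at h w : symmetric h ->
  degsum h + h w w = 2 * deg h w + \sum_(a | a != w) \sum_(b | b != w) h a b.
Proof.
move=> hs.
have deg_off a : deg h a = h a w + \sum_(b | b != w) h a b by rewrite degE (bigD1 w).
have col : \sum_(a | a != w) (h a w : nat) + h w w = deg h w.
  rewrite addnC -(@bigD1 _ _ _ _ w xpredT) //= degE.
  by apply: eq_bigr => a _; rewrite hs.
rewrite /degsum (bigD1 w) //=.
under eq_bigr => a _ do rewrite deg_off.
by rewrite big_split /=; move: col; lia.
Qed.

Lemma degsum_local h h' w : symmetric h -> symmetric h' -> h w w = h' w w ->
  (forall a b, a != w -> b != w -> h a b = h' a b) ->
  degsum h + 2 * deg h' w = degsum h' + 2 * deg h w.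
Proof.
move=> hs hs' hww off.
have := degsum_at w hs; have := degsum_at w hs'.
rewrite hww (eq_bigr (fun a => \sum_(b | b != w) h a b)) => [|a aw]; last first.
  by apply: eq_bigr => b bw; rewrite off.
lia.
Qed.

Definition bipartite_subgraph h (f : rel T) (X Y : {set T}) : Prop :=
  [disjoint X & Y] /\ symmetric f /\ (forall x y, f x y -> h x y) /\
  (forall x y, f x y -> (x \in X /\ y \in Y) \/ (x \in Y /\ y \in X)) /\
  (exists x y, f x y).

Lemma bipartite_subgraph_sub h h' f X Y : (forall x y, h x y -> h' x y) ->
  bipartite_subgraph h f X Y -> bipartite_subgraph h' f X Y.
Proof. by move=> hh' [dXY [fs [fh rest]]]; do 3!split => //; move=> x y /fh/hh'. Qed.
End Degrees.

Section Pruning.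
Variables (T : finType) (g : rel T).
Hypotheses (gs : symmetric g) (gi : irreflexive g).

Definition induced (U : {set T}) : rel T :=
  fun x y => [&& g x y, x \in U & y \in U].

Lemma induced_sym U : symmetric (induced U).
Proof. by move=> x y; rewrite /induced gs [(y \in U) && _]andbC. Qed.

Lemma degsum_delete U w :
  degsum (induced U) = degsum (induced (U :\ w)) + 2 * deg (induced U) w.
Proof.
have isolated : deg (induced (U :\ w)) w = 0.
  rewrite /deg; apply/eqP; rewrite cards_eq0; apply/eqP/setP => u.
  by rewrite /induced !inE eqxx /= andbF.
have := @degsum_local _ (induced U) (induced (U :\ w)) w (induced_sym U)
  (induced_sym (U :\ w)).
rewrite isolated /induced gi => /(_ erefl); rewrite muln0 addn0 => -> // a b aw bw.
by rewrite !inE aw bw.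
Qed.

(* Pruning: if the weights [t] are small compared to [M] times the degree
   sum, repeatedly deleting vertices [v] with [M * deg v < t v] ends in a
   non-empty induced subgraph in which every vertex has [t v <= M * deg v]. *)
Lemma pruning (M : nat) (t : T -> nat) :
  2 * \sum_v t v < M * degsum g ->
  exists U : {set T}, 0 < degsum (induced U) /\
    forall v, v \in U -> t v <= M * deg (induced U) v.
Proof.
suff prune (U : {set T}) : 2 * \sum_(v in U) t v < M * degsum (induced U) ->
    exists U' : {set T}, 0 < degsum (induced U') /\
      forall v, v \in U' -> t v <= M * deg (induced U') v.
  have induced_setT : degsum (induced [set: T]) = degsum g.
    apply: eq_bigr => v _; apply: eq_card => u.
    by rewrite !inE /induced !in_setT !andbT.
  move=> dense; apply: (prune [set: T]); rewrite induced_setT.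
  by rewrite (eq_bigl xpredT) // => v; rewrite in_setT.
elim: {U}_.+1 {-2}U (ltnSn #|U|) => // n IH U leUn hU.
have [w /andP[wU light]|heavy] :=
  pickP [pred w | (w \in U) && (M * deg (induced U) w < t w)].
  apply: (IH (U :\ w)); first by rewrite (cardsD1 w U) wU in leUn.
  move: hU; rewrite (big_setD1 w wU) (degsum_delete U w) /= mulnDr.
  move: light; lia.
exists U; split; first by move: hU; case: (degsum _); rewrite ?muln0.
by move=> v vU; move: (heavy v); rewrite /= vU /= => /negbT; rewrite -leqNgt.
Qed.
End Pruning.

Section MaxCut.
Variables (T : finType) (e : rel T).
Hypotheses (es : symmetric e) (ei : irreflexive e).

Definition cross (S : {set T}) : rel T :=
  fun x y => e x y && ((x \in S) != (y \in S)).

Lemma cross_sym S : symmetric (cross S).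
Proof. by move=> x y; rewrite /cross es eq_sym. Qed.

(* Moving [v] to the other side of the cut exchanges its crossing and its
   non-crossing edges. *)
Lemma deg_cross_flip S v :
  deg (cross S) v + deg (cross [set u | (u \in S) != (u == v)]) v = deg e v.
Proof.
rewrite !degE -big_split /=; apply: eq_bigr => u _; rewrite /cross !inE eqxx.
have [->|_] := eqVneq u v; first by rewrite ei.
by case: (e v u); case: (v \in S); case: (u \in S).
Qed.

(* A maximum cut keeps at least half of the edges at every vertex. *)
Lemma maxcut : exists S : {set T}, forall v, deg e v <= 2 * deg (cross S) v.
Proof.
have [S _ Smax] := @arg_maxnP _ set0 xpredT (fun S => degsum (cross S)) isT.
exists S => v; set S' := [set u | (u \in S) != (u == v)].
have local : degsum (cross S) + 2 * deg (cross S') v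
           = degsum (cross S') + 2 * deg (cross S) v.
  apply: degsum_local (cross_sym S) (cross_sym S') _ _.
    by rewrite /cross !eqxx !andbF.
  move=> a b /negbTE av /negbTE bv; rewrite /cross /S' !inE av bv.
  by case: (a \in S); case: (b \in S).
have := Smax S' isT; have := deg_cross_flip S v; rewrite -/S'; lia.
Qed.
End MaxCut.

Lemma sum_delta (B m : nat) (F : nat -> nat) :
  m < B -> \sum_(r < B) (m == r) * F r = F m.
Proof.
move=> mB; rewrite (bigD1 (Ordinal mB)) //= eqxx mul1n big1 ?addn0 // => r.
by rewrite -val_eqE /= eq_sym => /negbTE ->.
Qed.

Lemma up_log2_le (m : nat) : 0 < m -> 2 ^ up_log 2 m <= 2 * m.
Proof.
case: m => [|[|m]] // _.
have := @up_log_gtn 2 m.+2 isT isT.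
have : 0 < up_log 2 m.+2 by rewrite up_log_gt0.
by case: (up_log 2 m.+2) => // k _; rewrite expnS leq_mul2l => /ltnW.
Qed.

Section Layers.
Variables (T : finType) (c : rel T) (S : {set T}).
Hypotheses (cs : symmetric c) (c_cut : forall x y, c x y -> (x \in S) != (y \in S)).

Lemma deg_pos x y : c x y -> 0 < deg c x.
Proof. by move=> cxy; rewrite /deg card_gt0; apply/set0Pn; exists y; rewrite inE. Qed.

Definition level (v : T) : nat := up_log 2 (deg c v).

(* The rank refines the level by the side of the cut; its parity is the side,
   so the two ends of an edge have different ranks. *)
Definition rank (v : T) : nat := (v \in S) + (level v).*2.

Lemma rank_neq x y : c x y -> rank x != rank y.
Proof.
move=> /c_cut; apply: contraTneq => /(congr1 odd).
by rewrite /rank !oddD !odd_double !addbF !oddb => ->; rewrite eqxx.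
Qed.

Definition layer (r : nat) : rel T :=
  fun x y => c x y && (maxn (rank x) (rank y) == r).

Definition head (r : nat) : {set T} :=
  [set v | (rank v == r) && (0 < deg c v)].

Lemma layer_sym r : symmetric (layer r).
Proof. by move=> x y; rewrite /layer cs maxnC. Qed.

Lemma layer_sub r x y : layer r x y -> c x y.
Proof. by case/andP. Qed.

Lemma layer_head r x y : layer r x y -> (x \in head r) != (y \in head r).
Proof.
case/andP=> cxy /eqP <-; have cyx : c y x by rewrite cs.
rewrite !inE (deg_pos cxy) (deg_pos cyx) !andbT.
have := rank_neq cxy; lia.
Qed.

Lemma deg_rank_le r v : rank v <= r -> deg c v <= 2 ^ r./2.
Proof.
move=> /half_leq; rewrite /rank half_bit_double => lev_r.
by apply: leq_trans (@up_logP 2 _ isT) _; rewrite leq_exp2l.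
Qed.

Lemma deg_layer r v : deg (layer r) v <= 2 ^ r./2.
Proof.
have [->//|] := posnP (deg (layer r) v).
rewrite /deg card_gt0 => /set0Pn[u]; rewrite inE => /andP[cvu /eqP rv].
apply: leq_trans (deg_rank_le (_ : rank v <= r)); last by rewrite -rv leq_maxl.
by apply: deg_mono => w /andP[].
Qed.

Definition weight (N tY r : nat) (v : T) : nat :=
  if v \in head r then N * 2 ^ r./2 else tY.

Lemma layer_extract N tY r : 0 < N ->
  2 * \sum_v weight N tY r v < 160 * N * degsum (layer r) ->
  exists (X Y : {set T}) (f : rel T), bipartite_subgraph c f X Y /\
    (forall x, x \in X -> maxdeg f (X :|: Y) <= 160 * deg f x) /\
    (forall y, y \in Y -> tY <= 160 * N * deg f y).
Proof.
move=> N_pos dense.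
have layer_irr : irreflexive (layer r).
  by move=> x; apply/negP => /layer_sub/c_cut; rewrite eqxx.
have [U [U_edge U_heavy]] := pruning (layer_sym r) layer_irr dense.
set f := induced (layer r) U.
have f_layer x y : f x y -> layer r x y by case/andP.
have f_maxdeg v : deg f v <= 2 ^ r./2.
  by apply: leq_trans (deg_layer r v); apply: deg_mono => u /f_layer.
exists (U :&: head r), (U :\: head r), f; split; [do 4?split | split].
- rewrite disjoints_subset; apply/subsetP => x /setIP[_ xh].
  by rewrite in_setC in_setD xh.
- exact: (induced_sym (layer_sym r)).
- by move=> x y /f_layer/layer_sub.
- move=> x y fxy; have := layer_head (f_layer _ _ fxy); case/and3P: fxy => _ xU yU.
  rewrite !in_setI !in_setD xU yU /=.
  by case: (x \in head r); case: (y \in head r); auto.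
- exact: edge_of_degsum.
- move=> x /setIP[xU xh]; apply/bigmax_leqP => v _; apply: leq_trans (f_maxdeg v) _.
  by have := U_heavy x xU; rewrite /weight xh [160 * N]mulnC -mulnA leq_pmul2l.
- by move=> y /setDP[yU /negbTE yh]; have := U_heavy y yU; rewrite /weight yh.
Qed.

Variable B : nat.
Hypothesis rank_lt : forall v, rank v < B.

(* The layers partition the edges. *)
Lemma degsum_layers : degsum c = \sum_(r < B) degsum (layer r).
Proof.
rewrite /degsum [RHS]exchange_big /=; apply: eq_bigr => v _.
under eq_bigr => r _ do rewrite degE.
rewrite degE [RHS]exchange_big /=; apply: eq_bigr => u _.
have top_lt : maxn (rank v) (rank u) < B by rewrite gtn_max !rank_lt.
rewrite -[LHS](sum_delta (fun=> c v u) top_lt); apply: eq_bigr => r _.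
by rewrite /layer; case: (c v u); case: (_ == _).
Qed.

Lemma head_weights v : \sum_(r < B) (v \in head r) * 2 ^ r./2 <= 2 * deg c v.
Proof.
have [dv0|dv_pos] := posnP (deg c v).
  by rewrite big1 // => r _; rewrite inE dv0 andbF.
under eq_bigr => r _ do rewrite inE dv_pos andbT.
by rewrite (sum_delta (fun r => 2 ^ r./2)) // /rank half_bit_double up_log2_le.
Qed.

Lemma weights_total N tY v :
  \sum_(r < B) weight N tY r v <= 2 * N * deg c v + B * tY.
Proof.
apply: (@leq_trans (\sum_(r < B) (N * ((v \in head r) * 2 ^ r./2) + tY))).
  apply: leq_sum => r _; rewrite /weight.
  by case: (v \in head r); rewrite ?mul1n ?mul0n ?muln0 ?leq_addr ?leq_addl.
rewrite big_split /= -big_distrr /= sum_nat_const card_ord leq_add2r.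
by rewrite [2 * N]mulnC -mulnA leq_mul2l head_weights orbT.
Qed.

Lemma layer_budget N tY :
  (forall r : 'I_B, 160 * N * degsum (layer r) <= 2 * \sum_v weight N tY r v) ->
  78 * N * degsum c <= B * #|T| * tY.
Proof.
move=> sparse.
have lower : 160 * N * degsum c <= 2 * \sum_v \sum_(r < B) weight N tY r v.
  rewrite degsum_layers [in X in _ <= X]exchange_big /= !big_distrr /=.
  by apply: leq_sum => r _; exact: sparse.
have upper : \sum_v \sum_(r < B) weight N tY r v
             <= 2 * N * degsum c + #|T| * (B * tY).
  rewrite /degsum big_distrr /= -sum_nat_const -big_split /=.
  by apply: leq_sum => v _; exact: weights_total.
move: lower upper; nia.
Qed.

Lemma dense_layer N tY : 0 < N -> B * #|T| * tY < 78 * N * degsum c ->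
  exists (X Y : {set T}) (f : rel T), bipartite_subgraph c f X Y /\
    (forall x, x \in X -> maxdeg f (X :|: Y) <= 160 * deg f x) /\
    (forall y, y \in Y -> tY <= 160 * N * deg f y).
Proof.
move=> N_pos budget.
have [r dense|sparse] := pickP (fun r : 'I_B =>
  2 * \sum_v weight N tY r v < 160 * N * degsum (layer r)).
  exact: layer_extract N_pos dense.
by move: budget; rewrite ltnNge layer_budget // => r; rewrite leqNgt sparse.
Qed.
End Layers.

(* Proof: take a maximum cut and a dense layer of it. *)
Theorem bipartite_core (T : finType) (e : rel T) (N tY : nat) :
  symmetric e -> irreflexive e -> 0 < N ->
  2 * (up_log 2 #|T|).+1 * #|T| * tY < 39 * N * \sum_v deg e v ->
  exists (X Y : {set T}) (f : rel T), bipartite_subgraph e f X Y /\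
    (forall x, x \in X -> maxdeg f (X :|: Y) <= 160 * deg f x) /\
    (forall y, y \in Y -> tY <= 160 * N * deg f y).
Proof.
move=> es ei N_pos budget.
have [S S_half] := maxcut es ei.
set c := cross e S.
have c_cut x y : c x y -> (x \in S) != (y \in S) by case/andP.
have rank_lt v : rank c S v < 2 * (up_log 2 #|T|).+1.
  have : level c v <= up_log 2 #|T| by apply/leq_up_log/max_card.
  by rewrite /rank -mul2n; case: (v \in S) => /=; lia.
have cut_budget : 39 * N * \sum_v deg e v <= 78 * N * degsum c.
  suff : \sum_v deg e v <= 2 * degsum c by move=> ?; nia.
  by rewrite /degsum big_distrr; apply: leq_sum => v _; exact: S_half.
have [X [Y [f [bip rest]]]] :=
  dense_layer (cross_sym es S) c_cut rank_lt N_pos (leq_trans budget cut_budget).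
by exists X, Y, f; split=> //; apply: bipartite_subgraph_sub bip => x y /andP[].
Qed.

Section RealBounds.
Local Open Scope R_scope.

Lemma INR_leq (a b : nat) : (a <= b)%N -> INR a <= INR b.
Proof. by move/leP; apply: le_INR. Qed.

Lemma leq_of_INR (a b : nat) : INR a <= INR b -> (a <= b)%N.
Proof. by move/INR_le/leP. Qed.

Lemma ltn_of_INR (a b : nat) : INR a < INR b -> (a < b)%N.
Proof. by move/INR_lt/ltP. Qed.

Lemma INR_muln (a b : nat) : INR (a * b)%N = INR a * INR b.
Proof. exact: mult_INR. Qed.

Lemma INR_expn2 (k : nat) : INR (2 ^ k)%N = 2 ^ k.
Proof. by elim: k => // k IH; rewrite expnS INR_muln IH. Qed.

Lemma log2_pow2 (k : nat) : log2 (2 ^ k) = INR k.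
Proof.
have ln2_pos : 0 < ln 2 by rewrite -ln_1; apply: ln_increasing; lra.
by rewrite /log2 ln_pow; [field; lra | lra].
Qed.

Lemma log2_le (x y : R) : 0 < x -> x <= y -> log2 x <= log2 y.
Proof.
move=> x_pos [x_lt_y|<-]; last by right.
have ln2_pos : 0 < ln 2 by rewrite -ln_1; apply: ln_increasing; lra.
apply: Rmult_le_compat_r; first by left; apply: Rinv_0_lt_compat.
by left; apply: ln_increasing.
Qed.

Lemma log2_ge_nat (m k : nat) : (2 ^ k <= m)%N -> INR k <= log2 (INR m).
Proof.
move=> /INR_leq; rewrite INR_expn2 -(log2_pow2 k) => le_km.
by apply: log2_le le_km; apply: pow_lt; lra.
Qed.

Lemma log2_le_nat (m k : nat) : (0 < m)%N -> (m <= 2 ^ k)%N -> log2 (INR m) <= INR k.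
Proof.
move=> /ltP/lt_0_INR m_pos /INR_leq; rewrite INR_expn2 -(log2_pow2 k).
exact: log2_le.
Qed.

Lemma nat_ceil (x : R) : 0 <= x -> exists t : nat, x <= INR t <= x + 1.
Proof.
move=> x_ge0; have [up_gt up_le] := archimed x.
have up_ge0 : (0 <= up x)%Z by apply: le_IZR; lra.
by exists (Z.to_nat (up x)); rewrite INR_IZR_INZ Z2Nat.id //; lra.
Qed.

(* The final numeric estimate: with average degree [d >= 16], [L = log2 n]
   and [K <= L + 1], a threshold [t] of about [8 n d / L] meets the budget
   of [bipartite_core] with [N = n]. *)
Lemma budget_real (n d L K t : R) :
  16 <= d -> 4 <= L -> L <= n -> K <= L + 1 ->
  0 <= t -> t <= 160 * n * (d / (20 * L)) + 1 ->
  2 * (K + 1) * n * t < 39 * n * (d * n).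
Proof.
move=> d_ge L_ge L_le K_le t_ge t_le.
have t_le' : L * t <= 8 * n * d + L.
  have -> : 8 * n * d + L = L * (160 * n * (d / (20 * L)) + 1) by field; lra.
  by apply: Rmult_le_compat_l; lra.
have t_le2 : t <= 2 * n * d + 1.
  apply: Rle_trans t_le _; have : d / (20 * L) <= d / 80.
    apply: Rmult_le_compat_l; first lra.
    by apply: Rinv_le_contravar; lra.
  by nra.
have K_t : (K + 1) * t <= (L + 2) * t by nra.
nra.
Qed.

Lemma threshold (n D : nat) (d : R) :
  16 <= d -> (0 < n)%N -> INR D = d * INR n -> (D <= n * n)%N ->
  exists t : nat, (2 * (up_log 2 n).+1 * n * t < 39 * n * D)%N /\
    forall k : nat, INR t <= INR (160 * n * k) -> d / (20 * log2 (INR n)) <= INR k.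
Proof.
move=> d_ge n_pos D_eq D_le.
have n_posR : 0 < INR n by apply/lt_0_INR/ltP.
have n_ge : (16 <= n)%N.
  apply: leq_of_INR; move/INR_leq: D_le; rewrite INR_muln D_eq => dn_le.
  rewrite (INR_IZR_INZ 16) /=; nra.
set L := log2 (INR n); set K := up_log 2 n.
have L_ge : 4 <= L by have := @log2_ge_nat n 4 n_ge; rewrite (INR_IZR_INZ 4).
have L_le : L <= INR n by apply/log2_le_nat/ltnW/ltn_expl.
have K_le : INR K <= L + 1.
  have K_pred : INR K.-1 <= L.
    by apply/log2_ge_nat/ltnW/up_log_gtn => //; apply: leq_trans n_ge.
  by have := INR_leq (leqSpred K); rewrite S_INR; lra.
have q_ge : 0 <= d / (20 * L).
  by apply: Rmult_le_pos; [lra | left; apply: Rinv_0_lt_compat; lra].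
have [t [t_lo t_hi]] := @nat_ceil (160 * INR n * (d / (20 * L))) ltac:(nra).
exists t; split.
  apply: ltn_of_INR.
  rewrite !INR_muln (INR_IZR_INZ 2) (INR_IZR_INZ 39) S_INR D_eq.
  rewrite ![Z.of_nat _]/=.
  by apply: (budget_real (L := L)) => //; apply: pos_INR.
move=> k; rewrite !INR_muln (INR_IZR_INZ 160) [Z.of_nat _]/= => t_le.
by apply: (Rmult_le_reg_l (160 * INR n)); lra.
Qed.
End RealBounds.

Theorem lemma4p3 :
  exists d0 : R, forall d : R, Rle d0 d ->
  forall (T : finType) (e : rel T),
    symmetric e -> irreflexive e -> (0 < #|T|)%N ->
    avgdeg e = d ->
    exists (X Y : {set T}) (f : rel T),
      [disjoint X & Y] /\
      symmetric f /\
      (forall x y, f x y -> e x y) /\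
      (forall x y, f x y -> (x \in X /\ y \in Y) \/ (x \in Y /\ y \in X)) /\
      (exists x y, f x y) /\
      (forall x, x \in X ->
         Rle (Rdiv (INR (maxdeg f (X :|: Y))) 160) (INR (deg f x))) /\
      (forall y, y \in Y ->
         Rle (Rdiv d (Rmult 20 (log2 (INR #|T|)))) (INR (deg f y))).
Proof.
exists (16 : R) => d d_ge T e es ei n_pos avg.
set n := #|T|; set D := \sum_v deg e v.
have D_eq : INR D = Rmult d (INR n).
  by rewrite -avg /avgdeg /D /n; field; apply/not_0_INR/eqP; rewrite -lt0n.
have D_le : D <= n * n.
  by rewrite -sum_nat_const; apply: leq_sum => v _; apply: max_card.
have [t [t_budget t_Y]] := threshold d_ge n_pos D_eq D_le.
have [X [Y [f [[dXY [fs [fe [f_bip f_edge]]]] [f_X f_Y]]]]] :=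
  bipartite_core es ei n_pos t_budget.
exists X, Y, f; do !split => //; last by move=> y /f_Y/INR_leq/t_Y.
move=> x /f_X/INR_leq; rewrite INR_muln (INR_IZR_INZ 160) [Z.of_nat _]/= => maxdeg_le.
lra.
Qed.
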